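(* Assume $\mathfrak{d}=\omega_1$, and let $\langle f_\alpha:\alpha<\omega_1\rangle$ be functions in ${}^\omega\omega$ with $f_\alpha<^*f_\beta$ whenever $\alpha<\beta$ and such that for every $g\in{}^\omega\omega$ there is $\alpha$ with $g<^*f_\alpha$. Let $\{P_i:i<\omega\}$ be a partition of $\omega$ into infinite sets, and for $\alpha<\omega_1$ let $Z_\alpha=\{n<\omega:\exists i\,(n\in P_i\text{ and }n>f_\alpha(i))\}$. Let $X$ be the space with underlying set $(\omega\times\omega_1)\cup\{\infty\}$, where all points of $\omega\times\omega_1$ are isolated and a local subbase at $\infty$ consists of the sets $X\setminus(P_i\times\omega_1)$ for $i<\omega$ and $X\setminus(Z_\alpha\times\alpha)$ for $\alpha<\omega_1$. Suppose $U$ is a filter on $\omega$ with dual ideal $I$ such that $P_i\in I$ for all $i<\omega$ and $Z_\alpha\notin I$ for all $\alpha<\omega_1$. Then $X$ is Fréchet and $L$-selective but not $U$-selective.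
   Context: $f<^*g$ means $f(n)<g(n)$ for all but finitely many $n$. A space is Fréchet if whenever $x\in\overline{A}$ there is a sequence in $A$ converging to $x$. $\mathcal{F}(X)$ is the set of nonempty closed subsets of $X$; $\varphi:Y\rightarrow\mathcal{F}(X)$ is lower semicontinuous if for every open $W\subseteq X$, $\{y:\varphi(y)\cap W\neq\emptyset\}$ is open in $Y$. $X$ is $Y$-selective if every lower semicontinuous $\varphi:Y\rightarrow\mathcal{F}(X)$ has a continuous selection $s:Y\rightarrow X$ (i.e., $s(y)\in\varphi(y)$ for all $y$). $X$ is $L$-selective if it is $(\omega+1)$-selective, where $\omega+1$ carries the order topology (a convergent sequence). For a filter $U$ on $\omega$, $Y_U$ is the space on $\omega\cup\{\infty\}$ with points of $\omega$ isolated and neighborhoods of $\infty$ the sets $A\cup\{\infty\}$, $A\in U$; $X$ is $U$-selective if it is $Y_U$-selective. *)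

From Stdlib Require Import List Arith.

Definition closure {T : Type} (op : (T -> Prop) -> Prop) (A : T -> Prop) (x : T) : Prop :=
  forall V, op V -> V x -> exists y, V y /\ A y.

Definition converges {T : Type} (op : (T -> Prop) -> Prop) (s : nat -> T) (x : T) : Prop :=
  forall V, op V -> V x -> exists N, forall n, N <= n -> V (s n).

Definition frechet {T : Type} (op : (T -> Prop) -> Prop) : Prop :=
  forall (A : T -> Prop) (x : T), closure op A x ->
    exists s : nat -> T, (forall n, A (s n)) /\ converges op s x.

Definition closed {T : Type} (op : (T -> Prop) -> Prop) (C : T -> Prop) : Prop :=
  op (fun x => ~ C x).

Definition into_F {Y X : Type} (opX : (X -> Prop) -> Prop) (phi : Y -> X -> Prop) : Prop :=
  forall y, (exists x, phi y x) /\ closed opX (phi y).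

Definition lower_semicontinuous {Y X : Type} (opY : (Y -> Prop) -> Prop)
  (opX : (X -> Prop) -> Prop) (phi : Y -> X -> Prop) : Prop :=
  forall W, opX W -> opY (fun y => exists x, phi y x /\ W x).

Definition continuous_map {Y X : Type} (opY : (Y -> Prop) -> Prop)
  (opX : (X -> Prop) -> Prop) (s : Y -> X) : Prop :=
  forall W, opX W -> opY (fun y => W (s y)).

Definition selective {Y X : Type} (opY : (Y -> Prop) -> Prop) (opX : (X -> Prop) -> Prop) : Prop :=
  forall phi : Y -> X -> Prop, into_F opX phi -> lower_semicontinuous opY opX phi ->
    exists s : Y -> X, continuous_map opY opX s /\ forall y, phi y (s y).

(* ---------- the space omega+1 (None = omega) with the order topology ---------- *)
Definition omega_plus_one_open (V : option nat -> Prop) : Prop :=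
  V None -> exists N, forall n, N <= n -> V (Some n).

Definition L_selective {X : Type} (opX : (X -> Prop) -> Prop) : Prop :=
  selective omega_plus_one_open opX.

(* ---------- filters on omega and the space Y_U (None = infinity) ---------- *)
Definition filter_on_omega (U : (nat -> Prop) -> Prop) : Prop :=
  U (fun _ => True) /\ ~ U (fun _ => False) /\
  (forall A B : nat -> Prop, U A -> (forall n, A n -> B n) -> U B) /\
  (forall A B : nat -> Prop, U A -> U B -> U (fun n => A n /\ B n)).

Definition in_dual_ideal (U : (nat -> Prop) -> Prop) (A : nat -> Prop) : Prop :=
  U (fun n => ~ A n).

Definition YU_open (U : (nat -> Prop) -> Prop) (V : option nat -> Prop) : Prop :=
  V None -> U (fun n => V (Some n)).

Definition U_selective {X : Type} (U : (nat -> Prop) -> Prop) (opX : (X -> Prop) -> Prop) : Prop :=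
  selective (YU_open U) opX.

(* (W, lt) is (order-isomorphic to) omega_1: an uncountable strict well-order
   all of whose proper initial segments are countable *)
Record is_omega1 (W : Type) (lt : W -> W -> Prop) : Prop := {
  om1_irrefl : forall a, ~ lt a a;
  om1_trans : forall a b c, lt a b -> lt b c -> lt a c;
  om1_total : forall a b, lt a b \/ a = b \/ lt b a;
  om1_wf : well_founded lt;
  om1_uncountable : ~ exists h : W -> nat, forall a b, h a = h b -> a = b;
  om1_segments_countable : forall a, exists h : W -> nat,
      forall b c, lt b a -> lt c a -> h b = h c -> b = c
}.

Definition lt_star (f g : nat -> nat) : Prop :=
  exists N, forall n, N <= n -> f n < g n.

Definition partition_infinite (P : nat -> nat -> Prop) : Prop :=
  (forall i m, exists n, m <= n /\ P i n) /\
  (forall i j n, P i n -> P j n -> i = j) /\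
  (forall n, exists i, P i n).

Definition Zset (P : nat -> nat -> Prop) {W : Type} (f : W -> nat -> nat) (a : W) (n : nat) : Prop :=
  exists i, P i n /\ f a i < n.

(* Points of omega x omega_1 are isolated; a set containing infinity is open iff it
   contains a finite intersection of the subbasic sets
   X \ (P_i x omega_1)  and  X \ (Z_alpha x alpha). *)
Definition X_open {W : Type} (lt : W -> W -> Prop) (f : W -> nat -> nat)
  (P : nat -> nat -> Prop) (V : option (nat * W) -> Prop) : Prop :=
  V None ->
  exists (is : list nat) (als : list W),
    forall (n : nat) (b : W),
      (forall i, In i is -> ~ P i n) ->
      (forall a, In a als -> ~ (Zset P f a n /\ lt b a)) ->
      V (Some (n, b)).

(* Everything rests on a selection principle: if A_0, A_1, ... are nonempty subsets of
   ω×ω₁ and every neighbourhood of ∞ meets A_k for all large k, then some y_k ∈ A_k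
   converge to ∞.  Fréchetness is the case A_k = A; L-selectivity is the case
   A_k = φ(k), or everything when ∞ ∈ φ(k).

   To find y, bound by a single δ < ω₁ the countably many bounded vertical sections
   {β | (n,β) ∈ A_k}, and diagonalise against the countably many subbasic sets given
   by the P_i, Z_δ and Z_γ (γ < δ); this yields x_k ∈ A_k eventually outside each of
   them.  As x_k eventually leaves every P_i, its first coordinates are bounded on
   P_i by some g, and g <* f_α for some α.  If the section of x_k is bounded, keep
   x_k: its height is below δ, so it avoids Z_δ, hence Z_γ for γ > δ up to finitely
   many P_i.  Otherwise move x_k up its section to height at least α, where
   g <* f_α <* f_γ keeps it out of Z_γ×γ for γ > α.

   X is not U-selective: since P_i ∈ I, the columns {n}×ω₁ form a lower
   semicontinuous map on Y_U; the heights of a selection are bounded by some δ, and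
   continuity at ∞ against the open set X \ (Z_δ×δ) would put Z_δ into I. *)

From Stdlib Require Import PeanoNat Compare_dec List Lia Classical ClassicalEpsilon Cantor.

Definition eventually (Q : nat -> Prop) : Prop := exists K, forall k, K <= k -> Q k.

Lemma eventually_mono (Q Q' : nat -> Prop) :
  (forall k, Q k -> Q' k) -> eventually Q -> eventually Q'.
Proof. intros HQ [K HK]. exists K. auto. Qed.

Lemma eventually_and (Q Q' : nat -> Prop) :
  eventually Q -> eventually Q' -> eventually (fun k => Q k /\ Q' k).
Proof.
  intros [K HK] [K' HK']. exists (max K K'). intros k Hk. split; [apply HK | apply HK']; lia.
Qed.

Lemma eventually_forall_in {A : Type} (Q : A -> nat -> Prop) (l : list A) :
  (forall a, In a l -> eventually (Q a)) -> eventually (fun k => forall a, In a l -> Q a k).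
Proof.
  induction l as [|a l IH]; intros H.
  - exists 0. intros k _ a [].
  - destruct (eventually_and _ _ (H a (or_introl eq_refl)) (IH (fun b Hb => H b (or_intror Hb))))
      as [K HK].
    exists K. intros k Hk b Hb. destruct (HK k Hk) as [Ha Hl].
    destruct Hb as [<- | Hb]; auto.
Qed.

Lemma eventually_forall_lt (Q : nat -> nat -> Prop) (N : nat) :
  (forall i, eventually (Q i)) -> eventually (fun k => forall i, i < N -> Q i k).
Proof.
  intros H. apply (eventually_mono (fun k => forall i, In i (seq 0 N) -> Q i k)).
  - intros k Hk i Hi. apply Hk, in_seq. lia.
  - apply eventually_forall_in. auto.
Qed.

Section DiagonalSelection.

Context {T : Type} (R : nat -> T -> Prop).
Hypothesis R_antitone : forall j j' p, j <= j' -> R j' p -> R j p.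

Lemma exists_point_in_deepest_level (A : T -> Prop) :
  (exists p, A p) ->
  forall n, exists p, A p /\ forall j, j <= n -> (exists p', A p' /\ R j p') -> R j p.
Proof.
  intros [p0 Ap0] n. induction n as [|n [p [Ap Hp]]].
  - destruct (classic (exists p', A p' /\ R 0 p')) as [[p [Ap Rp]] | Hnone].
    + exists p. split; auto. intros j Hj _. replace j with 0 by lia. auto.
    + exists p0. split; auto. intros j Hj Hex. replace j with 0 in Hex by lia. contradiction.
  - destruct (classic (exists p', A p' /\ R (S n) p')) as [[q [Aq Rq]] | Hnone].
    + exists q. split; auto. intros j Hj _. apply (R_antitone j (S n)); auto.
    + exists p. split; auto. intros j Hj Hex.
      destruct (Nat.eq_dec j (S n)) as [-> | Hne]; [contradiction | apply Hp; auto; lia].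
Qed.

Lemma diagonal_selection (A : nat -> T -> Prop) :
  (forall k, exists p, A k p) ->
  (forall j, eventually (fun k => exists p, A k p /\ R j p)) ->
  exists x : nat -> T, (forall k, A k (x k)) /\ forall j, eventually (fun k => R j (x k)).
Proof.
  intros Hne Hmeet.
  destruct (choice _ (fun k => exists_point_in_deepest_level (A k) (Hne k) k)) as [x Hx].
  exists x. split; [intros k; apply Hx|].
  intros j. destruct (Hmeet j) as [K HK]. exists (max K j). intros k Hk.
  apply (proj2 (Hx k)); [lia | apply HK; lia].
Qed.

End DiagonalSelection.

Lemma initial_values_bounded (u : nat -> nat) (n : nat) : exists M, forall k, k < n -> u k <= M.
Proof.
  induction n as [|n [M HM]].
  - exists 0. intros k Hk. lia.
  - exists (max M (u n)). intros k Hk.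
    destruct (Nat.eq_dec k n) as [-> | Hne]; [lia | specialize (HM k ltac:(lia)); lia].
Qed.

Lemma bounded_on_blocks (u : nat -> nat) (Q : nat -> nat -> Prop) :
  (forall i, eventually (fun k => ~ Q i (u k))) ->
  exists g : nat -> nat, forall i k, Q i (u k) -> u k <= g i.
Proof.
  intros H. destruct (choice _ H) as [K HK].
  destruct (choice _ (fun i => initial_values_bounded u (K i))) as [g Hg].
  exists g. intros i k HQ. apply Hg.
  destruct (le_lt_dec (K i) k) as [Hk | Hk]; [exfalso; exact (HK i k Hk HQ) | exact Hk].
Qed.

Lemma lt_star_trans (f g h : nat -> nat) : lt_star f g -> lt_star g h -> lt_star f h.
Proof.
  intros [N1 H1] [N2 H2]. exists (max N1 N2). intros n Hn.
  specialize (H1 n ltac:(lia)). specialize (H2 n ltac:(lia)). lia.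
Qed.

Section Omega1.

Context {W : Type} {lt : W -> W -> Prop}.
Hypothesis Hom : is_omega1 W lt.

Lemma om1_inhabited : inhabited W.
Proof.
  apply NNPP. intros Hempty. apply (om1_uncountable _ _ Hom).
  exists (fun _ => 0). intros a. exfalso. exact (Hempty (inhabits a)).
Qed.

Lemma om1_asym a b : lt a b -> ~ lt b a.
Proof. intros Hab Hba. exact (om1_irrefl _ _ Hom a (om1_trans _ _ Hom _ _ _ Hab Hba)). Qed.

(* If no [d] bounds [s], then [W] is the union of the countably many countable
   sets [{b | b <= s m}]; coding [b] by the pair (a chosen such [m], its code in that
   segment) injects [W] into [nat]. *)
Lemma om1_bounded_seq (s : nat -> W) : exists d, forall m, lt (s m) d.
Proof.
  apply NNPP. intros Hunb.
  assert (Hcov : forall b, exists m, b = s m \/ lt b (s m)).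
  { intros b. apply NNPP. intros Hb. apply Hunb. exists b. intros m.
    destruct (om1_total _ _ Hom (s m) b) as [H | [H | H]]; auto;
      exfalso; apply Hb; exists m; auto. }
  destruct (choice _ Hcov) as [mf Hmf].
  destruct (choice _ (fun m => om1_segments_countable _ _ Hom (s m))) as [code Hcode].
  apply (om1_uncountable _ _ Hom).
  exists (fun b => to_nat (mf b, if excluded_middle_informative (b = s (mf b)) then 0
                               else S (code (mf b) b))).
  intros a b Hab. apply to_nat_inj in Hab. injection Hab as Em Ec.
  destruct (excluded_middle_informative (a = s (mf a))) as [Ea | Ea];
    destruct (excluded_middle_informative (b = s (mf b))) as [Eb | Eb]; try discriminate.
  - rewrite Ea, Eb, Em. reflexivity.
  - injection Ec as Ec. rewrite <- Em in Ec.
    destruct (Hmf a) as [? | Ha]; [contradiction|].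
    destruct (Hmf b) as [? | Hb]; [contradiction|]. rewrite <- Em in Hb.
    exact (Hcode _ _ _ Ha Hb Ec).
Qed.

Lemma om1_bounded_list (l : list W) : exists d, forall a, In a l -> lt a d.
Proof.
  destruct om1_inhabited as [w0].
  destruct (om1_bounded_seq (fun m => nth m l w0)) as [d Hd].
  exists d. intros a Ha. destruct (In_nth l a w0 Ha) as [m [_ <-]]. apply Hd.
Qed.

Lemma om1_common_bound (B : nat -> W -> Prop) :
  (forall m, exists c, forall b, B m b -> lt b c) -> exists d, forall m b, B m b -> lt b d.
Proof.
  intros H. destruct (choice _ H) as [c Hc]. destruct (om1_bounded_seq c) as [d Hd].
  exists d. intros m b Hb. exact (om1_trans _ _ Hom _ _ _ (Hc m b Hb) (Hd m)).
Qed.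

Lemma om1_segment_enum (d : W) : exists e : nat -> W, forall b, lt b d -> exists m, e m = b.
Proof.
  destruct (om1_segments_countable _ _ Hom d) as [code Hcode].
  assert (Hdec : forall m, exists b, (exists b', lt b' d /\ code b' = m) -> lt b d /\ code b = m).
  { intros m. destruct (classic (exists b', lt b' d /\ code b' = m)) as [[b Hb] | Hnone].
    - exists b. auto.
    - exists d. contradiction. }
  destruct (choice _ Hdec) as [e He]. exists e. intros b Hb. exists (code b).
  destruct (He (code b)) as [Hlt Heq]; eauto.
Qed.

End Omega1.

Lemma filter_forall_in (U : (nat -> Prop) -> Prop) (Q : nat -> nat -> Prop) (l : list nat) :
  filter_on_omega U -> (forall i, U (Q i)) -> U (fun n => forall i, In i l -> Q i n).
Proof.
  intros [UT [_ [Umono Uint]]] HQ. induction l as [|i l IH].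
  - apply (Umono (fun _ => True)); [exact UT | intros n _ i []].
  - apply (Umono (fun n => Q i n /\ forall j, In j l -> Q j n)); [apply Uint; auto|].
    intros n [Hi Hl] j [<- | Hj]; auto.
Qed.

Section Space.

Context {W : Type} (lt : W -> W -> Prop) (f : W -> nat -> nat) (P : nat -> nat -> Prop).
Hypothesis Hom : is_omega1 W lt.
Hypothesis f_increasing : forall a b, lt a b -> lt_star (f a) (f b).
Hypothesis f_dominating : forall g : nat -> nat, exists a, lt_star g (f a).
Hypothesis P_partition : partition_infinite P.

Local Notation opX := (X_open lt f P).

Definition avoids_Z (a : W) (p : nat * W) : Prop := ~ (Zset P f a (fst p) /\ lt (snd p) a).

Definition basic_nbhd (is : list nat) (als : list W) (z : option (nat * W)) : Prop :=
  match z with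
  | None => True
  | Some p => (forall i, In i is -> ~ P i (fst p)) /\ (forall a, In a als -> avoids_Z a p)
  end.

Lemma basic_nbhd_open (is : list nat) (als : list W) : opX (basic_nbhd is als).
Proof. intros _. exists is, als. intros n b His Hals. split; auto. Qed.

Lemma open_basic_nbhd (V : option (nat * W) -> Prop) :
  opX V -> V None -> exists is als, forall z, basic_nbhd is als z -> V z.
Proof.
  intros HV HVn. destruct (HV HVn) as [is [als Hsub]]. exists is, als.
  intros [[n b] |] Hz; [destruct Hz; apply Hsub; auto | exact HVn].
Qed.

Lemma point_open (p : nat * W) : opX (fun z => z = Some p).
Proof. intros H. discriminate. Qed.

Lemma converges_to_infinity (y : nat -> nat * W) :
  (forall i, eventually (fun k => ~ P i (fst (y k)))) ->
  (forall a, eventually (fun k => avoids_Z a (y k))) ->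
  converges opX (fun k => Some (y k)) None.
Proof.
  intros Hcol HZ V HV HVn. destruct (open_basic_nbhd V HV HVn) as [is [als Hsub]].
  destruct (eventually_and _ _ (eventually_forall_in _ is (fun i _ => Hcol i))
                               (eventually_forall_in _ als (fun a _ => HZ a))) as [K HK].
  exists K. intros k Hk. apply Hsub. exact (HK k Hk).
Qed.

Lemma eventually_not_Zset (u : nat -> nat) (C : nat -> Prop) (h : nat -> nat) (a : W) :
  (forall i, eventually (fun k => ~ P i (u k))) ->
  lt_star h (f a) ->
  eventually (fun k => C k -> forall i, P i (u k) -> u k <= h i) ->
  eventually (fun k => C k -> ~ Zset P f a (u k)).
Proof.
  intros Hcol [N HN] Hle.
  apply (eventually_mono (fun k => (forall i, i < N -> ~ P i (u k)) /\
                                   (C k -> forall i, P i (u k) -> u k <= h i))).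
  - intros k [Hsmall Hk] HC [i [Pi Hi]]. destruct (le_lt_dec N i) as [HiN | HiN].
    + specialize (HN i HiN). specialize (Hk HC i Pi). lia.
    + exact (Hsmall i HiN Pi).
  - apply eventually_and; [apply eventually_forall_lt; exact Hcol | exact Hle].
Qed.

Lemma avoids_Z_below (x : nat -> nat * W) (d : W) :
  (forall i, eventually (fun k => ~ P i (fst (x k)))) ->
  (forall a, lt a d \/ a = d -> eventually (fun k => avoids_Z a (x k))) ->
  forall a, eventually (fun k => lt (snd (x k)) d -> avoids_Z a (x k)).
Proof.
  intros Hcol Hbelow a.
  destruct (om1_total _ _ Hom d a) as [Hda | [<- | Had]].
  - apply (eventually_mono (fun k => lt (snd (x k)) d -> ~ Zset P f a (fst (x k)))).
    { intros k H Hd [Hz _]. exact (H Hd Hz). }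
    apply (eventually_not_Zset _ _ (f d) a Hcol (f_increasing _ _ Hda)).
    refine (eventually_mono _ _ (fun k Hk Hd i Pi => _) (Hbelow d (or_intror eq_refl))).
    destruct (le_lt_dec (fst (x k)) (f d i)) as [Hle | Hgt]; [exact Hle|].
    exfalso. apply Hk. split; [exists i; auto | exact Hd].
  - apply (eventually_mono (fun k => avoids_Z d (x k))); auto.
  - apply (eventually_mono (fun k => avoids_Z a (x k))); auto.
Qed.

Lemma avoids_Z_above (y : nat -> nat * W) (g : nat -> nat) (a1 : W) :
  (forall i, eventually (fun k => ~ P i (fst (y k)))) ->
  (forall i k, P i (fst (y k)) -> fst (y k) <= g i) ->
  lt_star g (f a1) ->
  forall a, eventually (fun k => ~ lt (snd (y k)) a1 -> avoids_Z a (y k)).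
Proof.
  intros Hcol Hg Ha1 a.
  destruct (classic (lt a1 a)) as [Ha | Ha].
  - apply (eventually_mono (fun k => True -> ~ Zset P f a (fst (y k)))).
    { intros k H _ [Hz _]. exact (H I Hz). }
    apply (eventually_not_Zset _ _ g a Hcol (lt_star_trans _ _ _ Ha1 (f_increasing _ _ Ha))).
    exists 0. intros k _ _ i Pi. exact (Hg i k Pi).
  - exists 0. intros k _ Hk [_ Hlt].
    destruct (om1_total _ _ Hom (snd (y k)) a1) as [H | [H | H]].
    + contradiction.
    + rewrite H in Hlt. contradiction.
    + exact (Ha (om1_trans _ _ Hom _ _ _ H Hlt)).
Qed.

Section Selection.

Variable A : nat -> nat * W -> Prop.
Hypothesis A_nonempty : forall k, exists p, A k p.
Hypothesis A_meets_nbhds : forall V, opX V -> V None ->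
  eventually (fun k => exists p, A k p /\ V (Some p)).

Definition bounded_section (k n : nat) : Prop := exists c, forall b, A k (n, b) -> lt b c.

Lemma bounded_sections_bound :
  exists d, forall k n b, bounded_section k n -> A k (n, b) -> lt b d.
Proof.
  destruct (om1_inhabited Hom) as [w0].
  assert (Hk : forall k, exists c, forall n b, bounded_section k n /\ A k (n, b) -> lt b c).
  { intros k. apply (om1_common_bound Hom (fun n b => bounded_section k n /\ A k (n, b))).
    intros n. destruct (classic (bounded_section k n)) as [[c Hc] | Hunb].
    - exists c. intros b [_ Hb]. auto.
    - exists w0. intros b [Hb _]. contradiction. }
  destruct (om1_common_bound Hom (fun k b => exists n, bounded_section k n /\ A k (n, b)))
    as [d Hd].
  { intros k. destruct (Hk k) as [c Hc]. exists c. intros b [n Hnb]. exact (Hc n b Hnb). }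
  exists d. intros k n b Hbnd Hb. apply (Hd k). eauto.
Qed.

Lemma selection_avoiding_segment (d : W) :
  exists x : nat -> nat * W, (forall k, A k (x k)) /\
    (forall i, eventually (fun k => ~ P i (fst (x k)))) /\
    (forall a, lt a d \/ a = d -> eventually (fun k => avoids_Z a (x k))).
Proof.
  destruct (om1_segment_enum Hom d) as [e He].
  set (R := fun j p => basic_nbhd (seq 0 j) (d :: map e (seq 0 j)) (Some p)).
  destruct (diagonal_selection R) with (A := A) as [x [HxA HxR]]; auto.
  - intros j j' p Hj [His Hals]. split.
    + intros i Hi. apply His. rewrite in_seq in *. lia.
    + intros a [<- | Ha]; apply Hals; [left; reflexivity | right].
      apply in_map_iff in Ha as [m [<- Hm]]. apply in_map. rewrite in_seq in *. lia.
  - intros j. exact (A_meets_nbhds _ (basic_nbhd_open _ _) I).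
  - exists x. split; [|split]; auto.
    + intros i. apply (eventually_mono (fun k => R (S i) (x k))); [|apply HxR].
      intros k [His _]. apply His, in_seq. lia.
    + intros a Ha.
      assert (Hm : exists m, In a (d :: map e (seq 0 m))).
      { destruct Ha as [Ha | <-]; [|exists 0; left; reflexivity].
        destruct (He a Ha) as [m <-]. exists (S m). right. apply in_map, in_seq. lia. }
      destruct Hm as [m Hm].
      apply (eventually_mono (fun k => R m (x k))); [|apply HxR].
      intros k [_ Hals]. exact (Hals a Hm).
Qed.

Lemma selection_converging :
  exists y, (forall k, A k (y k)) /\ converges opX (fun k => Some (y k)) None.
Proof.
  destruct bounded_sections_bound as [d Hd].
  destruct (selection_avoiding_segment d) as [x [HxA [Hcol Hbelow]]].
  destruct (bounded_on_blocks (fun k => fst (x k)) P Hcol) as [g Hg].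
  destruct (f_dominating g) as [a1 Ha1].
  assert (Hlift : forall k, exists p, A k p /\ fst p = fst (x k) /\
                    ((p = x k /\ lt (snd p) d) \/ ~ lt (snd p) a1)).
  { intros k. destruct (classic (bounded_section k (fst (x k)))) as [Hb | Hunb].
    - exists (x k). split; [auto | split; [reflexivity | left; split; [reflexivity|]]].
      apply (Hd k (fst (x k))); [exact Hb | rewrite <- surjective_pairing; apply HxA].
    - assert (Hhigh : exists b, A k (fst (x k), b) /\ ~ lt b a1).
      { apply NNPP. intros Hn. apply Hunb. exists a1. intros b Hb.
        apply NNPP. intros Hnlt. apply Hn. eauto. }
      destruct Hhigh as [b [Hb Hnlt]]. exists (fst (x k), b). auto. }
  destruct (choice _ Hlift) as [y Hy].
  assert (Hfst : forall k, fst (y k) = fst (x k)) by (intros k; apply Hy).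
  assert (Hcol_y : forall i, eventually (fun k => ~ P i (fst (y k)))).
  { intros i. refine (eventually_mono _ _ (fun k => _) (Hcol i)). rewrite Hfst. auto. }
  exists y. split; [apply Hy|]. apply converges_to_infinity; [exact Hcol_y|].
  intros a.
  apply (eventually_mono (fun k => (lt (snd (x k)) d -> avoids_Z a (x k)) /\
                                   (~ lt (snd (y k)) a1 -> avoids_Z a (y k)))).
  - intros k [Hlow Hhigh]. destruct (proj2 (proj2 (Hy k))) as [[Heq Hlt] | Hnlt]; auto.
    rewrite Heq in *. auto.
  - apply eventually_and; [apply avoids_Z_below; auto|].
    apply (avoids_Z_above y g a1 Hcol_y); auto. intros i k. rewrite Hfst. apply Hg.
Qed.

End Selection.

Lemma frechet_X : frechet opX.
Proof.
  intros B z Hcl. destruct (classic (B z)) as [Bz | nBz].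
  { exists (fun _ => z). split; auto. intros V _ Vz. exists 0. auto. }
  destruct z as [p |].
  { exfalso. destruct (Hcl _ (point_open p) eq_refl) as [z [-> Bz]]. contradiction. }
  destruct (selection_converging (fun _ p => B (Some p))) as [y [HyB Hy]].
  - intros _. destruct (Hcl _ (basic_nbhd_open nil nil) I) as [[p |] [_ Bz]];
      [eauto | contradiction].
  - intros V HV HVn. exists 0. intros k _.
    destruct (Hcl V HV HVn) as [[p |] [Vz Bz]]; [eauto | contradiction].
  - exists (fun k => Some (y k)). auto.
Qed.

Lemma nbhd_has_point (V : option (nat * W) -> Prop) : opX V -> V None -> exists p, V (Some p).
Proof.
  intros HV HVn. destruct (open_basic_nbhd V HV HVn) as [is [als Hsub]].
  destruct P_partition as [Hinf [Hdisj _]].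
  destruct (Hinf (S (list_max is)) 0) as [n [_ Hn]].
  destruct (om1_bounded_list Hom als) as [b Hb].
  exists (n, b). apply Hsub. split.
  - intros i Hi Pi. rewrite (Hdisj _ _ _ Pi Hn) in Hi.
    assert (Hle : Forall (fun k => k <= list_max is) is) by (apply list_max_le; lia).
    rewrite Forall_forall in Hle. specialize (Hle _ Hi). lia.
  - intros a Ha [_ Hba]. exact (om1_asym Hom _ _ (Hb a Ha) Hba).
Qed.

Lemma L_selective_X : L_selective opX.
Proof.
  intros phi Hphi Hlsc.
  destruct (classic (exists p, phi None (Some p))) as [[p Hp] | Hnone].
  - destruct (Hlsc _ (point_open p) (ex_intro _ _ (conj Hp eq_refl))) as [N HN].
    assert (Hs : forall k, exists z, phi (Some k) z /\ (N <= k -> z = Some p)).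
    { intros k. destruct (le_lt_dec N k) as [Hk | Hk].
      - destruct (HN k Hk) as [z [Hz ->]]. eauto.
      - destruct (proj1 (Hphi (Some k))) as [z Hz]. exists z. split; [exact Hz | lia]. }
    destruct (choice _ Hs) as [s Hs'].
    exists (fun y => match y with None => Some p | Some k => s k end). split.
    + intros V HV HVp. exists N. intros k Hk. rewrite (proj2 (Hs' k) Hk). exact HVp.
    + intros [k |]; [apply Hs' | exact Hp].
  - assert (HnoneN : phi None None).
    { destruct (proj1 (Hphi None)) as [[p |] Hz]; [exfalso; eauto | exact Hz]. }
    destruct (om1_inhabited Hom) as [w0].
    destruct (selection_converging (fun k p => phi (Some k) None \/ phi (Some k) (Some p)))
      as [y [Hy Hconv]].
    + intros k. destruct (proj1 (Hphi (Some k))) as [[p |] Hz]; [exists p | exists (0, w0)]; auto.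
    + intros V HV HVn. destruct (Hlsc V HV (ex_intro _ None (conj HnoneN HVn))) as [N HN].
      exists N. intros k Hk. destruct (HN k Hk) as [[p |] [Hz Vz]]; [eauto|].
      destruct (nbhd_has_point V HV HVn) as [p Vp]. eauto.
    + assert (Hs : forall k, exists z, phi (Some k) z /\ (z = None \/ z = Some (y k))).
      { intros k. destruct (Hy k); eauto. }
      destruct (choice _ Hs) as [s Hs'].
      exists (fun z => match z with None => None | Some k => s k end). split.
      * intros V HV HVn. destruct (Hconv V HV HVn) as [K HK]. exists K. intros k Hk.
        destruct (proj2 (Hs' k)) as [-> | ->]; auto.
      * intros [k |]; [apply Hs' | exact HnoneN].
Qed.

Lemma column_closed (n : nat) : closed opX (fun z => exists b, z = Some (n, b)).
Proof.
  intros _. destruct (proj2 (proj2 P_partition) n) as [i Hi]. exists (i :: nil), nil.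
  intros m b Hm _ [b' Heq]. injection Heq as -> _. exact (Hm i (or_introl eq_refl) Hi).
Qed.

Lemma not_U_selective_X (U : (nat -> Prop) -> Prop) :
  filter_on_omega U -> (forall i, in_dual_ideal U (P i)) ->
  (forall a, ~ in_dual_ideal U (Zset P f a)) -> ~ U_selective U opX.
Proof.
  intros HU HPi HZ Hsel. pose proof HU as (_ & _ & Umono & _).
  destruct (om1_inhabited Hom) as [w0].
  destruct (Hsel (fun y z => match y with None => z = None
                             | Some n => exists b, z = Some (n, b) end)) as [s [Hcont Hs]].
  - intros [n |]; split.
    + exists (Some (n, w0)), w0. reflexivity.
    + apply column_closed.
    + exists None. reflexivity.
    + intros Hn. exfalso. apply Hn. reflexivity.
  - intros V HV [z [-> Vz]].
    destruct (open_basic_nbhd V HV Vz) as [is [als Hsub]].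
    destruct (om1_bounded_list Hom als) as [b Hb].
    apply (Umono (fun n => forall i, In i is -> ~ P i n)); [apply filter_forall_in; auto|].
    intros n Hn. exists (Some (n, b)). split; [exists b; reflexivity|].
    apply Hsub. split; [exact Hn|]. intros a Ha [_ Hba]. exact (om1_asym Hom _ _ (Hb a Ha) Hba).
  - destruct (choice _ (fun n => Hs (Some n))) as [height Hheight].
    destruct (om1_bounded_seq Hom height) as [d Hd].
    assert (HsN : s None = None) by exact (Hs None).
    pose proof (Hcont _ (basic_nbhd_open nil (d :: nil))) as Hnbhd.
    unfold YU_open in Hnbhd. rewrite HsN in Hnbhd.
    apply (HZ d), (Umono _ _ (Hnbhd I)).
    intros n. rewrite Hheight. intros [_ Havoid] Hz.
    exact (Havoid d (or_introl eq_refl) (conj Hz (Hd n))).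
Qed.

End Space.

Theorem mainTheorem3 (W : Type) (lt : W -> W -> Prop) (f : W -> nat -> nat)
  (P : nat -> nat -> Prop) (U : (nat -> Prop) -> Prop) :
  is_omega1 W lt ->
  (forall a b, lt a b -> lt_star (f a) (f b)) ->
  (forall g : nat -> nat, exists a, lt_star g (f a)) ->
  partition_infinite P ->
  filter_on_omega U ->
  (forall i, in_dual_ideal U (P i)) ->
  (forall a, ~ in_dual_ideal U (Zset P f a)) ->
  frechet (X_open lt f P) /\ L_selective (X_open lt f P) /\ ~ U_selective U (X_open lt f P).
Proof.
  intros Hom Hincr Hdom Hpart HU HPi HZ. split; [|split].
  - exact (frechet_X lt f P Hom Hincr Hdom).
  - exact (L_selective_X lt f P Hom Hincr Hdom Hpart).
  - exact (not_U_selective_X lt f P Hom Hpart U HU HPi HZ).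
Qed.
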